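(* For every nonempty finite $W\subseteq\mathbb{N}$ with $l(W)=l$, $$\left(\frac{2l}{2l-1}\right)^{h(W)-1}\le |W|.$$
   Context: $\mathbb{N}=\{0,1,2,\ldots\}$. For a set $W$ of integers, $l(W)$ is the maximum number of consecutive integers contained in $W$. For a finite $L\subseteq\mathbb{N}$ and an integer $r$, write $L+r:=\{x+r: x\in L,\ x+r\ge 0\}$. Define $h$ on finite subsets of $\mathbb{N}$ recursively on $|L|$: $h(\emptyset)=0$, and for $L\neq\emptyset$, $$h(L)=1+\max\Big\{h(L\cap(L+1)),\ \max_{M\in T(L)}\min\{h(L\cap M),\,h(L\cap(M-1))\}\Big\},$$ where $T(L)$ is the set of all finite $M\subseteq\mathbb{N}$ with $M\notin\{L,L+1\}$ and $0<|M|\le|L|$. *)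

(* Finite subsets of N are represented by (seq nat), read as
   the set of their elements (duplicates and order irrelevant). *)
From HB Require Import structures.
From mathcomp Require Import all_boot all_order all_algebra.
Set Implicit Arguments. Unset Strict Implicit. Unset Printing Implicit Defensive.

Definition card_s (L : seq nat) : nat := size (undup L).

Definition inter_s (L M : seq nat) : seq nat := [seq x <- L | x \in M].

Definition shift_up (L : seq nat) : seq nat := [seq x.+1 | x <- L].

Definition shift_down (M : seq nat) : seq nat := [seq x.-1 | x <- M & 0 < x].

Definition run_s (W : seq nat) (a k : nat) : bool :=
  all (fun i => a + i \in W) (iota 0 k).

(* l(W): maximal number of consecutive integers contained in W
   (a run of length k starts at some a ∈ W and has k <= |W| <= size W). *)
Definition lrun (W : seq nat) : nat :=
  \max_(a <- W) \max_(k < (size W).+1 | run_s W a k) k.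

Definition inT (L M : seq nat) : Prop :=
  ~ (M =i L) /\ ~ (M =i shift_up L) /\ 0 < card_s M /\ card_s M <= card_s L.

(* h_is h : h is the function h of the paper, i.e. it is a function of the
   underlying set and satisfies the defining recursion
     h(∅) = 0,
     h(L) = 1 + max{ h(L ∩ (L+1)), max_{M ∈ T(L)} min{h(L∩M), h(L∩(M-1))} }.
   The (possibly infinite-indexed) max is written out as: upper bound of all
   candidates, attained by one candidate. *)
Definition h_is (h : seq nat -> nat) : Prop :=
  (forall L L' : seq nat, L =i L' -> h L = h L') /\
  h [::] = 0 /\
  (forall L : seq nat, L != [::] ->
     let a := h (inter_s L (shift_up L)) in
     let f := fun M => minn (h (inter_s L M)) (h (inter_s L (shift_down M))) in
     [/\ a.+1 <= h L,
         (forall M, inT L M -> (f M).+1 <= h L) &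
         (h L = a.+1 \/ exists2 M, inT L M & h L = (f M).+1)]).

From HB Require Import structures.
From mathcomp Require Import all_boot all_order all_algebra.
From mathcomp Require Import zify.
Import Order.TTheory GRing.Theory Num.Theory.

Set Implicit Arguments.
Unset Strict Implicit.
Unset Printing Implicit Defensive.

(* Let L be a nonempty finite set whose runs of consecutive integers all have
   length at most l, write n = |L|, and call s ∈ L a start if s - 1 ∉ L.
   Every element of L lies less than l above some start, so the number r of
   starts satisfies n <= l r, while |L ∩ (L+1)| = n - r.  Hence each candidate
   set in the recursion defining h(L) is small:
   - |L ∩ (L+1)| = n - r <= n (2l-1)/(2l);
   - for M ∈ T(L), the sets L ∩ M and (L ∩ (M-1)) + 1 both lie in M and
     intersect inside L ∩ (L+1), so |L∩M| + |L∩(M-1)| <= |M| + (n - r), and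
     the smaller of the two has at most (2n - r)/2 <= n (2l-1)/(2l) elements.
   So there is S ⊆ L with h(L) <= h(S) + 1 and |S| <= |L| (2l-1)/(2l)
   (lemma [h_step]); since S again has runs of length at most l, induction on
   |L| gives (2l/(2l-1))^(h(L)-1) <= |L| (lemma [h_bound]), and the theorem is
   the case l = l(W). *)

Lemma run_sP W a k : reflect (forall i, i < k -> a + i \in W) (run_s W a k).
Proof.
apply: (iffP allP) => [H i ik | H i]; first by apply: H; rewrite mem_iota.
by rewrite mem_iota add0n => /H.
Qed.

Lemma mem_shift_up L x : (x \in shift_up L) = (0 < x) && (x.-1 \in L).
Proof.
apply/mapP/andP => [[y yL ->] // | ].
by case: x => [[] | x [_ xL]] //; exists x.
Qed.

Lemma mem_shift_down M x : (x \in shift_down M) = (x.+1 \in M).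
Proof.
apply/mapP/idP => [[y] | xM]; last by exists x.+1; rewrite // mem_filter xM.
by rewrite mem_filter => /andP[y_gt0 yM] ->; rewrite prednK.
Qed.

Lemma inter_subl L M : {subset inter_s L M <= L}.
Proof. by move=> x; rewrite mem_filter => /andP[]. Qed.

Lemma card_inter L M : card_s (inter_s L M) = count (mem M) (undup L).
Proof. by rewrite /card_s /inter_s -filter_undup size_filter. Qed.

Lemma card_gt0 L : L != [::] -> 0 < card_s L.
Proof.
case: L => // x L _; rewrite /card_s lt0n size_eq0.
by apply: contraTneq (mem_head x L) => uL; rewrite -mem_undup uL.
Qed.

Definition runs_le (L : seq nat) (l : nat) : Prop :=
  forall a k, run_s L a k -> k <= l.

Lemma runs_le_sub L S l : {subset S <= L} -> runs_le L l -> runs_le S l.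
Proof.
by move=> SL Ll a k /run_sP Sak; apply: Ll; apply/run_sP => i /Sak; apply: SL.
Qed.

(* l(W) bounds every run of W: a run of length k is a set of k distinct
   elements of W, so k <= |W| lies within the range of the inner maximum. *)
Lemma runs_le_lrun W : runs_le W (lrun W).
Proof.
move=> a [// | k] /run_sP Wak.
have aW : a \in W by rewrite -(addn0 a); apply: Wak.
have k_lt : k.+1 < (size W).+1.
  rewrite ltnS (leq_trans _ (size_undup W)) //.
  rewrite -[k.+1](size_iota a) uniq_leq_size ?iota_uniq // => y.
  by rewrite mem_iota mem_undup => /andP[ay ya]; rewrite -(subnKC ay) Wak; lia.
apply: (bigmaxn_sup_seq _ aW) => //.
by apply: (leq_trans _ (leq_bigmax_cond (Ordinal k_lt) _)) => //; apply/run_sP.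
Qed.

Lemma lrun_gt0 W : W != [::] -> 0 < lrun W.
Proof.
case: W => // x W _; apply: (@runs_le_lrun _ x).
by apply/run_sP => -[_ | //]; rewrite addn0 mem_head.
Qed.

Definition starts (L : seq nat) : seq nat :=
  [seq s <- undup L | s \notin shift_up L].

Lemma card_starts L :
  card_s (inter_s L (shift_up L)) + size (starts L) = card_s L.
Proof. by rewrite card_inter size_filter count_predC. Qed.

(* Each x ∈ L is reached from a start s by a run s, ..., x lying in L; if runs
   have length <= l, then x < s + l. *)
Lemma start_below L l x : runs_le L l -> x \in L ->
  exists2 s, s \in starts L & s <= x < s + l.
Proof.
move=> Ll xL; suff [s s_start /andP[sx run_sx]] : exists2 s, s \in starts L &
    (s <= x) && run_s L s (x - s).+1.
  by exists s; rewrite // sx /=; have := Ll _ _ run_sx; lia.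
have start_y y : y \in L -> y \notin shift_up L -> y \in starts L.
  by move=> yL ynL; rewrite mem_filter mem_undup yL ynL.
elim: x xL => [|x IHx] xL.
  exists 0; first by rewrite start_y // mem_shift_up.
  by apply/run_sP => -[_ | //]; rewrite addn0.
have [xL1 | ] := boolP (x.+1 \in shift_up L); last first.
  move=> xnL; exists x.+1; first exact: start_y.
  by rewrite leqnn subnn; apply/run_sP => -[_ | //]; rewrite addn0.
rewrite mem_shift_up in xL1; have [s s_start /andP[sx /run_sP run_sx]] := IHx xL1.
exists s => //; apply/andP; split; first lia.
apply/run_sP => i i_lt; have [/run_sx // | i_ge] := ltnP i (x - s).+1.
by have -> : s + i = x.+1 by lia.
Qed.

(* Hence n <= l r: L is covered by the r blocks s, ..., s + l - 1. *)
Lemma card_le_starts L l : runs_le L l -> card_s L <= size (starts L) * l.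
Proof.
move=> Ll; rewrite -[l in _ * l](size_iota 0) -(size_allpairs addn).
apply: uniq_leq_size; first exact: undup_uniq.
move=> x; rewrite mem_undup => /(start_below Ll)[s s_start /andP[sx xs]].
by apply/allpairsP; exists (s, x - s); rewrite /= mem_iota s_start; split; lia.
Qed.

Lemma size_cat_uniq (T : eqType) (s1 s2 : seq T) : uniq s1 -> uniq s2 ->
  size s1 + size s2 = size (undup (s1 ++ s2)) + count (mem s2) s1.
Proof.
move=> u1 u2; rewrite undup_cat (undup_id u1) (undup_id u2) size_cat size_filter.
by rewrite -(count_predC (mem s2) s1) [RHS]addnC addnA.
Qed.

(* The two halves L ∩ M and L ∩ (M-1) of the second alternative: after shifting
   the latter up by one, both lie in M and they overlap inside L ∩ (L+1). *)
Lemma card_inter_pair L M :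
  card_s (inter_s L M) + card_s (inter_s L (shift_down M)) <=
  card_s M + card_s (inter_s L (shift_up L)).
Proof.
set A := [seq x <- undup L | x \in M].
set B := [seq x.+1 | x <- [seq x <- undup L | x \in shift_down M]].
have uA : uniq A by rewrite filter_uniq ?undup_uniq.
have uB : uniq B by rewrite map_inj_uniq ?filter_uniq ?undup_uniq //; apply: succn_inj.
have -> : card_s (inter_s L M) = size A by rewrite card_inter size_filter.
have -> : card_s (inter_s L (shift_down M)) = size B.
  by rewrite card_inter size_map size_filter.
rewrite size_cat_uniq //; apply: leq_add.
  apply: uniq_leq_size; first exact: undup_uniq.
  move=> x; rewrite mem_undup mem_cat mem_undup => /orP[].
    by rewrite mem_filter => /andP[].
  by case/mapP => y; rewrite mem_filter mem_shift_down => /andP[yM _] ->.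
rewrite card_inter -!size_filter; apply: uniq_leq_size; first exact: filter_uniq.
move=> x; rewrite !mem_filter => /and3P[/mapP[y yL ->] _ ->].
rewrite andbT inE mem_shift_up /=.
by move: yL; rewrite mem_filter mem_undup => /andP[].
Qed.

(* [shrinks l S L]: |S| <= |L| (2l-1)/(2l), stated without division. *)
Definition shrinks (l : nat) (S L : seq nat) : Prop :=
  card_s S * (2 * l) <= card_s L * (2 * l - 1).

Lemma shrinks_shift L l : 0 < l -> runs_le L l ->
  shrinks l (inter_s L (shift_up L)) L.
Proof.
move=> l_gt0 Ll; have := card_starts L; have := card_le_starts Ll.
rewrite /shrinks; nia.
Qed.

Lemma shrinks_min L M l : 0 < l -> runs_le L l -> card_s M <= card_s L ->
  minn (card_s (inter_s L M)) (card_s (inter_s L (shift_down M))) * (2 * l)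
  <= card_s L * (2 * l - 1).
Proof.
move=> l_gt0 Ll ML; have := card_inter_pair L M.
have := card_starts L; have := card_le_starts Ll; nia.
Qed.

Lemma h_step h L l : h_is h -> L != [::] -> 0 < l -> runs_le L l ->
  exists2 S, {subset S <= L} & h L <= (h S).+1 /\ shrinks l S L.
Proof.
move=> [_ [_ h_rec]] L0 l_gt0 Ll.
have [_ _ [-> | [M [_ [_ [_ ML]]] ->]]] := h_rec L L0.
  exists (inter_s L (shift_up L)); first exact: inter_subl.
  by split; last exact: shrinks_shift.
move: (shrinks_min l_gt0 Ll ML).
have [_ | _] := leqP (card_s (inter_s L M)) (card_s (inter_s L (shift_down M))).
  by move=> shrinkM; exists (inter_s L M); [apply: inter_subl | rewrite ltnS geq_minl].
by move=> shrinkM; exists (inter_s L (shift_down M)); [apply: inter_subl | rewrite ltnS geq_minr].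
Qed.

(* A nonempty set has positive h, as h(L) >= 1 + h(L ∩ (L+1)). *)
Lemma h_gt0 h L : h_is h -> L != [::] -> 0 < h L.
Proof. by move=> [_ [_ h_rec]] /h_rec[] /(leq_trans _) ->. Qed.

Local Open Scope ring_scope.

Definition ratio (l : nat) : rat := (2 * l)%:R / (2 * l - 1)%:R.

Lemma ratio_ge1 l : (0 < l)%N -> 1 <= ratio l.
Proof. by move=> l_gt0; rewrite ler_pdivlMr ?mul1r ?ler_nat ?ltr0n; lia. Qed.

Lemma ratio_shrinks l S L : (0 < l)%N -> shrinks l S L ->
  ratio l * (card_s S)%:R <= (card_s L)%:R.
Proof.
move=> l_gt0 SL; rewrite mulrAC ler_pdivrMr ?ltr0n; last lia.
by rewrite -!natrM ler_nat mulnC.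
Qed.

Lemma h_bound h L l : h_is h -> L != [::] -> (0 < l)%N -> runs_le L l ->
  ratio l ^+ (h L - 1) <= (card_s L)%:R.
Proof.
move=> hh; have [n] := ubnP (card_s L); elim: n L => // n IHn L cardL L0 l_gt0 Ll.
have [S SL [hLS shrinkS]] := h_step hh L0 l_gt0 Ll.
have [S0 | S0] := eqVneq S [::].
  have [_ [h0 _]] := hh; move: hLS; rewrite S0 h0 => hL1.
  by rewrite (_ : h L - 1 = 0)%N ?expr0 ?ler1n ?card_gt0 //; lia.
have cardS : (card_s S < n)%N.
  by have := card_gt0 L0; move: shrinkS; rewrite /shrinks; nia.
have IHS := IHn S cardS S0 l_gt0 (runs_le_sub SL Ll).
have ratio_gt0 : 0 < ratio l by apply: lt_le_trans (ratio_ge1 l_gt0).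
apply: le_trans (ratio_shrinks l_gt0 shrinkS).
apply: (le_trans (y := ratio l * ratio l ^+ (h S - 1))); last by rewrite ler_pM2l.
have hS_gt0 := h_gt0 hh S0.
by rewrite -exprS; apply: ler_weXn2l; [exact: ratio_ge1 | lia].
Qed.

Theorem mainTheorem6 (h : seq nat -> nat) (Hh : h_is h) (W : seq nat) :
  W != [::] ->
  (((2 * lrun W)%:R / (2 * lrun W - 1)%:R) ^+ (h W - 1) <= (card_s W)%:R :> rat)%R.
Proof.
move=> W0; exact: h_bound Hh W0 (lrun_gt0 W0) (@runs_le_lrun W).
Qed.
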